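(* For every integer $k\ge 1$, every $\mathcal{O}_k$-free graph $G$ of girth at least 11 has average degree $2|E(G)|/|V(G)|$ at most $2k$.
   Context: All graphs are finite, simple and nonempty. Two vertex-disjoint subgraphs are independent if there is no edge between them. A graph $G$ is $\mathcal{O}_k$-free if it does not contain $k$ pairwise vertex-disjoint and pairwise independent cycles; equivalently, $G$ has no induced subgraph isomorphic to a disjoint union of $k$ cycles. The girth is the minimum length of a cycle (infinite for forests). *)

From mathcomp Require Import all_boot.
Set Implicit Arguments. Unset Strict Implicit. Unset Printing Implicit Defensive.

Definition simple_graph (T : finType) (e : rel T) : Prop :=
  symmetric e /\ irreflexive e.

Definition is_cycle (T : finType) (e : rel T) (s : seq T) : bool :=
  [&& 3 <= size s, uniq s & cycle e s].

Definition disj_indep (T : finType) (e : rel T) (s t : seq T) : Prop :=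
  forall x y, x \in s -> y \in t -> x != y /\ ~~ e x y.

Definition has_k_indep_cycles (T : finType) (e : rel T) (k : nat) : Prop :=
  exists C : 'I_k -> seq T,
    (forall i, is_cycle e (C i)) /\
    (forall i j, i != j -> disj_indep e (C i) (C j)).

Definition Ok_free (T : finType) (e : rel T) (k : nat) : Prop :=
  ~ has_k_indep_cycles e k.

Definition girth_ge (T : finType) (e : rel T) (g : nat) : Prop :=
  forall s : seq T, is_cycle e s -> g <= size s.

(* number of edges: unordered pairs {x,y} with e x y *)
Definition num_edges (T : finType) (e : rel T) : nat :=
  #|[set p : T * T | e p.1 p.2]| %/ 2.

From mathcomp Require Import all_boot zify.

Set Implicit Arguments.
Unset Strict Implicit.
Unset Printing Implicit Defensive.

(* Induction on k and, for fixed k, on |S|: we bound 2|E(S)| by 2k|S| for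
   every O_k-free vertex set S.  A vertex of degree at most 1 can be deleted.
   Otherwise S contains a cycle; let C be a shortest one.  As the girth is at
   least 11, no path with at most three inner vertices outside C joins two
   vertices of C.  Hence C is induced, every vertex outside C has at most one
   neighbour on C, the neighbourhood N of C is independent, and every vertex of
   R = S \ (C u N) has at most one neighbour in N.  R sees no vertex of C, so it
   is O_(k-1)-free, and 2|E(S)| <= 2|C| + 2|N| + 2|R| + 2(k-1)|R| <= 2k|S|. *)

Section OkFreeGraph.
Variables (T : finType) (e : rel T).
Hypotheses (e_sym : symmetric e) (e_irr : irreflexive e) (girth11 : girth_ge e 11).

Definition deg (Y : {set T}) (x : T) : nat := #|[set y in Y | e x y]|.

Definition arcs (X Y : {set T}) : nat := \sum_(x in X) \sum_(y in Y) e x y.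

Lemma sum_adj (Y : {set T}) x : \sum_(y in Y) e x y = deg Y x.
Proof. by rewrite -big_mkcondr sum1dep_card. Qed.

Lemma deg_eq0 (Y : {set T}) x : {in Y, forall y, ~~ e x y} -> deg Y x = 0.
Proof.
move=> nadj; apply/eqP; rewrite cards_eq0; apply/eqP/setP => y; rewrite !inE.
by case: (boolP (y \in Y)) => // /nadj /negbTE.
Qed.

Lemma arcs_le (X Y : {set T}) d : {in X, forall x, deg Y x <= d} -> arcs X Y <= #|X| * d.
Proof.
by move=> le_d; rewrite -sum_nat_const; apply: leq_sum => x /le_d; rewrite sum_adj.
Qed.

Lemma sum_setU (F : T -> nat) (A B : {set T}) : [disjoint A & B] ->
  \sum_(x in A :|: B) F x = \sum_(x in A) F x + \sum_(x in B) F x.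
Proof. by move=> dAB; rewrite -bigU //; apply: eq_bigl => x; rewrite !inE. Qed.

Lemma cardsU_disjoint (A B : {set T}) : [disjoint A & B] -> #|A :|: B| = #|A| + #|B|.
Proof. by move=> dAB; apply/eqP; rewrite (leq_card_setU A B).2. Qed.

Lemma arcsUl (X A B : {set T}) : [disjoint A & B] -> arcs (A :|: B) X = arcs A X + arcs B X.
Proof. exact: sum_setU. Qed.

Lemma arcsUr (X A B : {set T}) : [disjoint A & B] -> arcs X (A :|: B) = arcs X A + arcs X B.
Proof. by move=> dAB; rewrite -big_split; apply: eq_bigr => x _; apply: sum_setU. Qed.

Lemma arcsC (X Y : {set T}) : arcs X Y = arcs Y X.
Proof.
by rewrite /arcs exchange_big; apply: eq_bigr => y _; apply: eq_bigr => x _; rewrite e_sym.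
Qed.

Lemma arcs_splitU (A B : {set T}) : [disjoint A & B] ->
  arcs (A :|: B) (A :|: B) = arcs A A + arcs B B + 2 * arcs A B.
Proof. by move=> dAB; rewrite arcsUl // !arcsUr // (arcsC B A); lia. Qed.

Lemma arcs_setD1 (S : {set T}) v : v \in S -> arcs S S = arcs (S :\ v) (S :\ v) + 2 * deg S v.
Proof.
move=> vS; have dvS : [disjoint [set v] & S :\ v] by rewrite disjoints1 setD11.
rewrite -{1 2}(setD1K vS) arcs_splitU // /arcs !big_set1 e_irr sum_adj /deg.
suff -> : [set y in S :\ v | e v y] = [set y in S | e v y] by [].
by apply/setP => y; rewrite !inE; case: (eqVneq y v) => [->|]; rewrite ?e_irr ?andbF.
Qed.

Lemma num_edges_arcs : 2 * num_edges e <= arcs setT setT.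
Proof.
have -> : arcs setT setT = #|[set p : T * T | e p.1 p.2]|.
  rewrite /arcs pair_big_dep /= -big_mkcondr /= sum1dep_card.
  by apply: eq_card => p; rewrite !inE.
by rewrite /num_edges mulnC leq_divM.
Qed.

Definition free_in (S : {set T}) (k : nat) : Prop :=
  ~ exists C : 'I_k -> seq T,
    (forall i, is_cycle e (C i) /\ {subset C i <= S}) /\
    (forall i j, i != j -> disj_indep e (C i) (C j)).

Lemma free_inS (A B : {set T}) k : A \subset B -> free_in B k -> free_in A k.
Proof.
move=> /subsetP AB free_B [C [C_cyc C_indep]]; apply: free_B; exists C; split=> // i.
by have [Ci CA] := C_cyc i; split=> // z /CA /AB.
Qed.

Section ShortestCycle.
Variable S : {set T}.

Definition shortest_in (c : seq T) :=
  [/\ is_cycle e c, {subset c <= S} &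
      forall c', is_cycle e c' -> {subset c' <= S} -> size c <= size c'].

Lemma shortest_in_exists (c : seq T) : is_cycle e c -> {subset c <= S} ->
  exists c0, shortest_in c0.
Proof.
move=> cc cS; pose P n := [exists t : n.-tuple T, is_cycle e t && all [in S] t].
have exP : exists n, P n.
  by exists (size c); apply/existsP; exists (in_tuple c); rewrite cc; apply/allP.
case: (ex_minnP exP) => n /existsP[t /andP[tc /allP tS]] n_min.
exists (tval t); split=> // c' c'c /allP c'S.
by rewrite size_tuple; apply: n_min; apply/existsP; exists (in_tuple c'); rewrite c'c.
Qed.

Lemma shortest_in_rot n (c : seq T) : shortest_in c -> shortest_in (rot n c).
Proof.
case=> /and3P[c3 cu cc] cS c_min; split.
- by rewrite /is_cycle size_rot rot_uniq rot_cycle c3 cu cc.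
- by move=> z; rewrite mem_rot => /cS.
- by move=> c' /c_min le_c /le_c; rewrite size_rot.
Qed.

Lemma shortest_in_rot_to (c : seq T) x : shortest_in c -> x \in c ->
  exists t, perm_eq c (x :: t) /\ shortest_in (x :: t).
Proof.
move=> sh /rot_to[i t rot_c]; exists t; rewrite -rot_c perm_sym perm_rot.
by split=> //; apply: shortest_in_rot.
Qed.

Lemma path_rcons_rev x y (q : seq T) : path e x (rcons q y) -> path e y (rcons (rev q) x).
Proof.
rewrite -rev_cons -(belast_rcons x q y) -{2}(last_rcons x q y) rev_path.
by apply: sub_path => u v; rewrite /= e_sym.
Qed.

(* Witness: the cycle [x :: a ++ y :: rev q]. *)
Lemma shortest_in_arc x (a : seq T) y (b q : seq T) :
  shortest_in (x :: a ++ y :: b) -> uniq ((x :: a ++ y :: b) ++ q) ->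
  {subset q <= S} -> path e x (rcons q y) -> 0 < size a + size q ->
  size b <= size q.
Proof.
case=> cc cS c_min U qS pq a_q.
have : uniq ((x :: a ++ y :: q) ++ b).
  rewrite (perm_uniq (s2 := (x :: a ++ y :: b) ++ q)) //= -!catA.
  by rewrite perm_cons perm_cat2l perm_cons perm_catC.
rewrite cat_uniq => /andP[U' _].
have cycle_q : is_cycle e (x :: a ++ y :: rev q).
  apply/and3P; split; first by rewrite /= size_cat /= size_rev; lia.
  - by rewrite (perm_uniq (s2 := x :: a ++ y :: q)) // perm_cons perm_cat2l perm_cons perm_rev.
  case/and3P: cc => _ _; rewrite /= !rcons_cat !rcons_cons !cat_path /=.
  by case/and3P=> -> -> _; rewrite path_rcons_rev.
have /c_min : {subset x :: a ++ y :: rev q <= S}.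
  move=> z; rewrite !(inE, mem_cat, mem_rev) => /or4P[/eqP->|za|/eqP->|/qS//];
    by apply: cS; rewrite !(inE, mem_cat) ?eqxx ?za ?orbT.
rewrite /= !size_cat /= size_rev; lia.
Qed.

Lemma shortest_in_detour x (a : seq T) y (b q : seq T) :
  shortest_in (x :: a ++ y :: b) -> uniq ((x :: a ++ y :: b) ++ q) ->
  {subset q <= S} -> path e x (rcons q y) -> 0 < size q ->
  size a + size b <= 2 * size q.
Proof.
move=> sh U qS pq q_gt0.
have le_b := shortest_in_arc sh U qS pq (ltn_addl _ q_gt0).
have rot_c : rot (size a).+1 (x :: a ++ y :: b) = y :: b ++ x :: a.
  by rewrite /rot /= drop_size_cat // take_size_cat.
have le_a : size a <= size q.
  rewrite -(size_rev q); apply: (@shortest_in_arc y b x a).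
  - by rewrite -rot_c; apply: shortest_in_rot.
  - rewrite (perm_uniq (s2 := (x :: a ++ y :: b) ++ q)) //.
    by apply: perm_cat; [rewrite -rot_c perm_rot | rewrite perm_rev].
  - by move=> z; rewrite mem_rev => /qS.
  - exact: path_rcons_rev.
  - by rewrite size_rev addn_gt0 q_gt0 orbT.
lia.
Qed.

Lemma shortest_in_deg2 (c : seq T) x : shortest_in c -> x \in c ->
  deg [set y | y \in c] x <= 2.
Proof.
move=> sh /(shortest_in_rot_to sh)[t [c_t sh_t]].
apply: (@leq_trans #|[set head x t; last x t]|); last by rewrite cards2 ltnS leq_b1.
apply/subset_leq_card/subsetP => y; rewrite !inE (perm_mem c_t) inE => /andP[yxt exy].
have /orP[/eqP yx|yt] := yxt; first by move: exy; rewrite yx e_irr.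
case/splitPr: yt sh_t => a b sh_t.
case: a sh_t => [|z a] sh_t; first by rewrite eqxx.
case/lastP: b sh_t => [|b w] sh_t; first by rewrite last_cat eqxx orbT.
have [/and3P[_ U _] _ _] := sh_t.
have nil_S : {subset [::] <= S} by [].
have := shortest_in_arc (q := [::]) sh_t; rewrite cats0 size_rcons => /(_ U nil_S).
by rewrite /= exy => /(_ isT isT).
Qed.

(* If x = y, then x :: q is a cycle below the girth; otherwise
   [shortest_in_detour] bounds the length of c by 2 |q| + 2 <= 8. *)
Lemma no_short_ear (c : seq T) (x y : T) (q : seq T) :
  shortest_in c -> x \in c -> y \in c ->
  uniq q -> {in q, forall z, z \notin c} -> {subset q <= S} ->
  path e x (rcons q y) -> 0 < size q <= 3 -> (x != y) || (1 < size q) -> False.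
Proof.
move=> sh xc yc uq qc qS pq /andP[q_gt0 q_le3].
case: (eqVneq x y) pq => [<-|xy] pq /= q_gt1.
  have : is_cycle e (x :: q).
    rewrite /is_cycle /= ltnS q_gt1 uq pq !andbT /=.
    by apply/negP => /(qc x); rewrite xc.
  by move/girth11; rewrite /= ltnS => /leq_trans/(_ q_le3).
have [t [c_t sh_t]] := shortest_in_rot_to sh xc.
have yt : y \in t by move: yc; rewrite (perm_mem c_t) inE eq_sym (negbTE xy).
case/splitPr: yt c_t sh_t => a b c_t sh_t.
have U : uniq ((x :: a ++ y :: b) ++ q).
  rewrite cat_uniq -(perm_uniq c_t) uq andbT; have [/and3P[_ -> _] _ _] := sh.
  by apply/hasPn => z /(qc z); rewrite (perm_mem c_t).
have [/girth11 c_ge11 _ _] := sh.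
have := shortest_in_detour sh_t U qS pq q_gt0.
move: c_ge11; rewrite (perm_size c_t) /= size_cat /=; lia.
Qed.

Section CycleNeighbourhood.
Variable c : seq T.
Hypothesis c_shortest : shortest_in c.

Let C := [set x | x \in c].
Let N := [set u in S | (u \notin c) && has (e u) c].
Let R := S :\: (C :|: N).

Lemma deg_cycle_le1 u : u \in S -> u \notin c -> deg C u <= 1.
Proof.
move=> uS uc; apply/card_le1_eqP => x y; rewrite !inE => /andP[xc eux] /andP[yc euy].
apply/eqP/negPn/negP => xy.
apply: (no_short_ear (q := [:: u]) c_shortest xc yc) => //.
- by move=> z; rewrite inE => /eqP->.
- by move=> z; rewrite inE => /eqP->.
- by rewrite /= e_sym eux euy.
- by rewrite eq_sym xy.
Qed.

Lemma memN u : u \in N -> [/\ u \in S, u \notin c & exists2 x, x \in c & e u x].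
Proof. by rewrite inE => /and3P[uS uc /hasP[x xc eux]]; split=> //; exists x. Qed.

Lemma memR r : r \in R -> [/\ r \in S, r \notin c, r \notin N & {in c, forall x, ~~ e r x}].
Proof.
rewrite !inE negb_or => /andP[/andP[rc rN] rS]; split=> // x xc.
by apply: contra rN => erx; rewrite rS rc; apply/hasP; exists x.
Qed.

Lemma N_indep u v : u \in N -> v \in N -> ~~ e u v.
Proof.
move=> /memN[uS uc [x xc eux]] /memN[vS vc [y yc evy]]; apply/negP => euv.
apply: (no_short_ear (q := [:: u; v]) c_shortest xc yc) => //.
- by rewrite /= inE andbT; apply: contraTneq euv => ->; rewrite e_irr.
- by move=> z; rewrite !inE => /orP[]/eqP->.
- by move=> z; rewrite !inE => /orP[]/eqP->.
- by rewrite /= e_sym eux euv evy.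
- by rewrite orbT.
Qed.

Lemma deg_N_le1 r : r \in R -> deg N r <= 1.
Proof.
move=> /memR[rS rc rN _]; apply/card_le1_eqP => u v.
rewrite in_set => /andP[uN eru]; rewrite in_set => /andP[vN erv].
apply/eqP/negPn/negP => vu.
have [uS uc [x xc eux]] := memN uN.
have [vS vc [y yc evy]] := memN vN.
have ur : u != r by apply: contraNneq rN => <-.
have rv : r != v by apply: contraNneq rN => ->.
apply: (no_short_ear (q := [:: u; r; v]) c_shortest xc yc) => //.
- by rewrite /= !inE negb_or ur eq_sym vu rv.
- by move=> z; rewrite !inE => /or3P[]/eqP->.
- by move=> z; rewrite !inE => /or3P[]/eqP->.
- by rewrite /= e_sym eux (e_sym u) eru erv evy.
- by rewrite orbT.
Qed.

Lemma free_R k : free_in S k.+1 -> free_in R k.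
Proof.
move=> free_S [D [D_cyc D_indep]]; apply: free_S.
have [c_cyc cS _] := c_shortest.
have DR j z : z \in D j -> z \in R by have [_] := D_cyc j; apply.
have c_D j x z : x \in c -> z \in D j -> x != z /\ ~~ e x z.
  move=> xc /DR /memR[_ zc _ z_c]; split; first by apply: contraNneq zc => <-.
  by rewrite e_sym z_c.
exists (fun i => oapp D c (unlift ord0 i)); split.
  move=> i; case: (unliftP ord0 i) => [j|] _ /=; last by [].
  by have [Dj _] := D_cyc j; split=> // z /DR /memR[].
move=> i j; case: (unliftP ord0 i) => [i'|] ->; case: (unliftP ord0 j) => [j'|] -> /= ij.
- by apply: D_indep; apply: contraNneq ij => ->.
- by move=> x y xD yc; have [yx eyx] := c_D i' y x yc xD; rewrite eq_sym yx e_sym.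
- by move=> x y xc yD; apply: c_D yD.
- by [].
Qed.

Lemma arcs_shortest_step k :
  arcs R R <= 2 * k * #|R| -> arcs S S <= 2 * k.+1 * #|S|.
Proof.
move=> le_R; have [_ cS _] := c_shortest.
have dCN : [disjoint C & N].
  by rewrite -setI_eq0; apply/eqP/setP => x; rewrite !inE; case: (x \in c); rewrite ?andbF.
have dCNR : [disjoint C :|: N & R] by rewrite -setI_eq0 /R setDE setICA setICr setI0.
have CNS : C :|: N \subset S.
  by rewrite subUset; apply/andP; split; apply/subsetP => x; rewrite !inE; [apply: cS | case/andP].
have S_CNR : S = (C :|: N) :|: R by rewrite -{1}(setID S (C :|: N)) (setIidPr CNS).
have card_S : #|S| = #|C| + #|N| + #|R| by rewrite {1}S_CNR !cardsU_disjoint.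
have arcsCC : arcs C C <= #|C| * 2.
  by apply: arcs_le => x; rewrite inE => /(shortest_in_deg2 c_shortest).
have arcsNN : arcs N N <= #|N| * 0.
  by apply: arcs_le => u uN; rewrite deg_eq0 // => v; apply: N_indep.
have arcsNC : arcs N C <= #|N| * 1.
  by apply: arcs_le => u /memN[uS uc _]; apply: deg_cycle_le1.
have arcsRC : arcs R C <= #|R| * 0.
  by apply: arcs_le => r /memR[_ _ _ r_c]; rewrite deg_eq0 // => x; rewrite inE => /r_c.
have arcsRN : arcs R N <= #|R| * 1 by apply: arcs_le => r /deg_N_le1.
rewrite card_S S_CNR !arcs_splitU // (arcsC _ R) arcsUr // (arcsC C).
lia.
Qed.

End CycleNeighbourhood.

End ShortestCycle.

Section MinDegreeCycle.
Variable S : {set T}.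
Hypothesis deg_ge2 : {in S, forall x, 1 < deg S x}.

Lemma other_neighbour x z : x \in S -> exists2 y, y \in S & (y != z) && e x y.
Proof.
move=> /deg_ge2; rewrite /deg (cardsD1 z) => deg_x.
have /set0Pn[y] : [set y in S | e x y] :\ z != set0.
  by rewrite -card_gt0; move: deg_x; case: (_ \in _) => /=; lia.
by rewrite !inE => /and3P[yz yS exy]; exists y; rewrite ?yz.
Qed.

(* The first vertex of a path has a neighbour in S other than the second one:
   either it extends the path or it closes a cycle. *)
Lemma path_or_cycle x0 m : x0 \in S ->
  (exists c, is_cycle e c /\ {subset c <= S}) \/
  exists x p, [/\ size p = m, uniq (x :: p), path e x p & {subset x :: p <= S}].
Proof.
move=> x0S; elim: m => [|m [cyc|[x [p [sp up pp pS]]]]]; [|by left|].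
  by right; exists x0, [::]; split=> // z; rewrite inE => /eqP->.
have [y yS /andP[y_hd exy]] := other_neighbour (head x p) (pS x (mem_head x p)).
case: (boolP (y \in x :: p)) => y_xp; last first.
  right; exists y, (x :: p); split=> /=; first by rewrite sp.
  - by rewrite y_xp.
  - by rewrite e_sym exy.
  - by move=> z; rewrite inE => /orP[/eqP->|/pS].
left; have yx : y != x by apply: contraTneq exy => ->; rewrite e_irr.
move: y_xp; rewrite inE (negbTE yx) /=.
case: p sp up pp pS y_hd => [|z p'] //= sp up /andP[exz pp] pS yz.
rewrite inE (negbTE yz) /= => y_p'.
case/splitPr: y_p' sp up pp pS => a b sp up pp pS.
exists (x :: z :: rcons a y); split.
  apply/and3P; split; first by rewrite /= size_rcons.
  - have : uniq ((x :: z :: rcons a y) ++ b) by rewrite !cat_cons cat_rcons.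
    by rewrite cat_uniq => /andP[].
  - rewrite /= exz rcons_path; move: pp; rewrite -cat_rcons cat_path => /andP[-> _].
    by rewrite last_rcons e_sym.
move=> u u_cyc; apply: pS; move: u_cyc; rewrite !(inE, mem_rcons, mem_cat).
by case: (u == x); case: (u == z); case: (u == y); case: (u \in a).
Qed.

Lemma mindeg2_cycle x0 : x0 \in S -> exists c, is_cycle e c /\ {subset c <= S}.
Proof.
move=> /(path_or_cycle #|T|)[//|[x [p [sp up _ _]]]].
by have := max_card (mem (x :: p)); rewrite (card_uniqP up) /= sp ltnn.
Qed.

End MinDegreeCycle.

Lemma arcs_free_le k S : free_in S k -> arcs S S <= 2 * k * #|S|.
Proof.
elim: k S => [|k IHk] S free_S.
  by case: free_S; exists (fun _ => [::]); split; case.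
have [n le_Sn] := ubnP #|S|; elim: n S free_S le_Sn => // n IHn S free_S le_Sn.
case: (set_0Vmem S) => [->|[x0 x0S]]; first by rewrite /arcs big_set0.
case: (boolP [exists v in S, deg S v <= 1]) => [/exists_inP[v vS deg_v]|].
  have card_S : #|S| = #|S :\ v|.+1 by rewrite (cardsD1 v S) vS.
  rewrite card_S ltnS in le_Sn.
  have := IHn (S :\ v) (free_inS (subD1set S v) free_S) le_Sn.
  rewrite (arcs_setD1 vS) card_S; lia.
rewrite negb_exists_in => /forall_inP deg_ge2.
have [c [c_cyc cS]] : exists c, is_cycle e c /\ {subset c <= S}.
  by apply: (@mindeg2_cycle S _ x0) x0S => x /deg_ge2; rewrite ltnNge.
have [c' c'_shortest] := shortest_in_exists c_cyc cS.
exact/(arcs_shortest_step c'_shortest)/IHk/(free_R c'_shortest).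
Qed.

End OkFreeGraph.

Theorem mainTheorem9 (k : nat) (T : finType) (e : rel T) :
  1 <= k -> 0 < #|T| -> simple_graph e -> Ok_free e k -> girth_ge e 11 ->
  2 * num_edges e <= 2 * k * #|T|.
Proof.
move=> _ _ [e_sym e_irr] Ok_free_e girth11.
have free_T : free_in e setT k.
  by case=> C [C_cyc C_indep]; apply: Ok_free_e; exists C; split=> // i; case: (C_cyc i).
apply: leq_trans (num_edges_arcs e) _.
by rewrite -cardsT; apply: arcs_free_le.
Qed.
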